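(* For any planar weighted graph $(G,x)$ and any set of dual edges $\varkappa\subset E(G^* )$, $$\sum_{P\in\mathcal E(G)}(-1)^{\varkappa\cdot P}x(P)=(-1)^{|\varkappa|}\sum_{D\in\mathcal D(G^K)}(-1)^{t(D)}(-1)^{\varkappa\cdot D}x^K(D).$$
   Context: Let $G$ be a finite connected graph embedded in the plane, with edge weights $x=(x_e)$. Let $\vec E(G)$ be the set of oriented edges, with origin $o(e)$ and reversal $\bar e$. $\mathcal E(G)$ is the set of even subgraphs and $x(P)=\prod_{e\in P}x_e$. $G^*$ is the planar dual and $e^*$ the dual of $e$. Terminal graph $G^K$. Its vertex set is $\vec E(G)$. It has long edges $\{e,\bar e\}$ of weight $1$, and short edges $\{e,e'\}$ of weight $(x_ex_{e'})^{1/2}$ for each pair $e\ne e'$ with $o(e)=o(e')$. $\mathcal D(G^K)$ is the set of its perfect matchings and $x^K(D)$ the product of the weights of the edges of $D$. $t(D)$ is the number of pairs of short edges of $D$ at the same vertex $v$ whose endpoints interlace in the cyclic order around $v$. Intersection counts. $|\varkappa|$ is the number of edges in $\varkappa$. $\varkappa\cdot P$ is the number of $e\in P$ with $e^*\in\varkappa$. $\varkappa\cdot D$ is the number of long edges $\{e,\bar e\}\in D$ whose underlying edge of $G$ has its dual in $\varkappa$. *)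

(* Planar graphs are represented by combinatorial maps
   (rotation systems): edges form a finType E, oriented edges (darts) are
   E * bool, reversal flips the boolean, and a permutation sigma of the darts
   gives the counter-clockwise cyclic order of darts around each vertex;
   vertices = sigma-orbits, faces = (sigma \o rev)-orbits. *)
From HB Require Import structures.
From mathcomp Require Import all_boot all_order all_algebra all_fingroup.
Set Implicit Arguments.
Unset Strict Implicit.
Unset Printing Implicit Defensive.
Import Order.TTheory GRing.Theory Num.Theory.

Section Map.
Variable E : finType.

Definition dart := (E * bool)%type.
Definition edge_of (d : dart) : E := d.1.
Definition rev_dart (d : dart) : dart := (d.1, ~~ d.2).

Variable sigma : {perm dart}.

Definition same_origin (a b : dart) : bool := fconnect sigma a b.

Definition face_perm (d : dart) : dart := sigma (rev_dart d).

Definition n_vertices : nat := fcard sigma (@predT dart).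
Definition n_faces : nat := fcard face_perm (@predT dart).

Definition map_connected : Prop :=
  forall a b : dart,
    connect (fun u v => (v == sigma u) || (v == rev_dart u)) a b.

(* the rotation system is a plane embedding: Euler's formula V - E + F = 2 *)
Definition map_planar : Prop := (n_vertices + n_faces = #|E| + 2)%N.

(* even subgraphs: every vertex has even degree (loops counted twice) *)
Definition even_subgraph (P : {set E}) : bool :=
  [forall d : dart, ~~ odd #|[set d' : dart | same_origin d d' & edge_of d' \in P]|].

(* Terminal graph G^K.  Edges: inl e = long edge {e, rev e};
   inr (a, b) = short edge {a, b} (valid when a != b, o(a) = o(b), and
   enum_rank a < enum_rank b so that each unordered pair occurs once). *)
Definition kedge := (E + (dart * dart))%type.

Definition kedge_valid (k : kedge) : bool :=
  match k with
  | inl _ => true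
  | inr (a, b) => same_origin a b && (enum_rank a < enum_rank b)%N
  end.

Definition kends (k : kedge) : {set dart} :=
  match k with
  | inl e => [set (e, true); (e, false)]
  | inr (a, b) => [set a; b]
  end.

Definition perfect_matching (M : {set kedge}) : bool :=
  [forall k in M, kedge_valid k] &&
  [forall d : dart, #|[set k in M | d \in kends k]| == 1%N].

Definition strictly_between (a b c : dart) : bool :=
  (c != a) && (findex sigma a c < findex sigma a b)%N.

Definition interlace (k1 k2 : kedge) : bool :=
  match k1, k2 with
  | inr (a, b), inr (c, d) =>
      same_origin a c &&
      (strictly_between a b c != strictly_between a b d)
  | _, _ => false
  end.

Definition tK (M : {set kedge}) : nat :=
  #|[set p : kedge * kedge | [&& p.1 \in M, p.2 \in M,
        (enum_rank p.1 < enum_rank p.2)%N & interlace p.1 p.2]]|.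

(* kappa . P  (kappa given as the set of edges e whose dual e^* is in kappa) *)
Definition kappa_dot_P (kappa P : {set E}) : nat := #|kappa :&: P|.

Definition kappa_dot_D (kappa : {set E}) (M : {set kedge}) : nat :=
  #|[set e in kappa | inl e \in M]|.

Local Open Scope ring_scope.

Definition weight_P (R : ringType) (x : E -> R) (P : {set E}) : R :=
  \prod_(e in P) x e.

Definition kweight (R : rcfType) (x : E -> R) (k : kedge) : R :=
  match k with
  | inl _ => 1
  | inr (a, b) => Num.sqrt (x (edge_of a) * x (edge_of b))
  end.

Definition weight_D (R : rcfType) (x : E -> R) (M : {set kedge}) : R :=
  \prod_(k in M) kweight x k.

End Map.

(* A perfect matching D of G^K is determined by the set P of edges whose long
   edge it omits, together with a perfect matching of the darts of P by short
   edges.  Given P, the weight of D is x(P) and the long edges of D with dual in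
   kappa are those of kappa \ P; only (-1)^t(D) still varies, and it depends on
   the short edges alone.  The signed count of short-edge perfect matchings of a
   set X of darts is 1 if X meets every vertex in an even number of darts and 0
   otherwise: match the dart d0 of least rank with one of the k - 1 other darts
   c of X at its vertex.  Removing the edge d0c changes t by the number of short
   edges crossing it, whose parity is that of the number of darts of X strictly
   between d0 and c, i.e. of the rank of c among the candidates; the alternating
   sum over the candidates is 1 if k is even and 0 otherwise.  Everything is
   local at the vertices. *)

From HB Require Import structures.
From mathcomp Require Import all_boot all_order all_algebra all_fingroup.
From mathcomp Require Import zify.
Import Order.TTheory GRing.Theory Num.Theory.
Set Implicit Arguments. Unset Strict Implicit. Unset Printing Implicit Defensive.

Lemma sum_sign_rank (R : pzRingType) (T : finType) (A : {set T}) (p : T -> nat) :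
  {in A &, injective p} ->
  (\sum_(c in A) (-1) ^+ #|[set u in A | (p u < p c)%N]| = (odd #|A|)%:R :> R)%R.
Proof.
move: {2}#|A| (erefl #|A|) => n; elim: n A => [|n IH] A cardA injp.
  by rewrite (cards0_eq cardA) big_set0 cards0.
have [m0 m0A] : exists m0, m0 \in A by apply/set0Pn; rewrite -card_gt0 cardA.
have [m mA mmax] := @arg_maxnP _ m0 (mem A) p m0A.
have {}mA : m \in A := mA.
have lt_m u : u \in A -> u != m -> p u < p m.
  move=> uA um; have pum : p u <= p m := mmax u uA.
  rewrite ltn_neqAle pum andbT.
  by apply: contra um => /eqP e; apply/eqP; apply: injp.
have below_m : [set u in A | p u < p m] = A :\ m.
  apply/setP => u; rewrite !inE; case: (eqVneq u m) => [->|um]; first by rewrite ltnn andbF.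
  by case: (boolP (u \in A)) => // uA; rewrite lt_m.
rewrite (big_setD1 m mA) /= below_m.
rewrite (eq_bigr (fun c => (-1) ^+ #|[set u in A :\ m | (p u < p c)%N]|))%R; last first.
  move=> c /setD1P [cm cA]; congr (_ ^+ _)%R; apply: eq_card => u; rewrite !inE.
  by case: (eqVneq u m) => [->|] //=; rewrite mA ltnNge ltnW ?lt_m.
have cardAm : #|A :\ m| = n by move: cardA; rewrite (cardsD1 m) mA => -[].
rewrite IH //; last by move=> u v /setD1P [_ uA] /setD1P [_ vA]; apply: injp.
rewrite cardAm cardA oddS -signr_odd.
by case: (odd n); rewrite /= ?expr1 ?expr0 ?addNr ?addr0.
Qed.

Lemma card_set_sum (T : finType) (P : pred T) : #|[set x | P x]| = \sum_x P x.
Proof. by rewrite -sum1dep_card big_mkcond; apply: eq_bigr => x _; case: (P x). Qed.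

Lemma shift_modn (n a b : nat) : a < n -> b < n ->
  (b + n - a) %% n = if a <= b then b - a else b + n - a.
Proof.
move=> an bn; case: leqP => ab; last by rewrite modn_small //; lia.
by rewrite -addnBAC // modnDr modn_small //; lia.
Qed.

(* Positions of [b], [c], [d] in a cyclic order of length [n], measured from
   [a] (at position 0) on the left and from [c] on the right. *)
Lemma interlace_shift (n pb pc pd : nat) :
  0 < pb < n -> 0 < pc < n -> 0 < pd < n ->
  pb != pc -> pb != pd -> pc != pd ->
  ((pc < pb) != (pd < pb)) =
  (((0 + n - pc) %% n < (pd + n - pc) %% n) != ((pb + n - pc) %% n < (pd + n - pc) %% n)).
Proof.
move=> *; rewrite !shift_modn; try lia.
by case: (leqP pc 0); case: (leqP pc pd); case: (leqP pc pb); lia.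
Qed.

Section CyclicOrder.
Variables (E : finType) (sigma : {perm dart E}).
Local Notation so := (same_origin sigma).
Local Notation fx := (findex sigma).
Local Notation ordr := (fingraph.order sigma).

Lemma same_origin_sym a b : so a b = so b a.
Proof. exact: (fconnect_sym (@perm_inj _ sigma)). Qed.

Lemma same_origin_trans a b c : so a b -> so b c -> so a c.
Proof. exact: connect_trans. Qed.

Lemma order_same_origin a c : so a c -> ordr c = ordr a.
Proof.
rewrite /same_origin fconnect_orbit => ac.
by rewrite (order_cycle (cycle_orbit (@perm_inj _ sigma) a)) ?orbit_uniq ?size_orbit.
Qed.

Lemma iter_modn_order k a : iter k sigma a = iter (k %% ordr a) sigma a.
Proof.
rewrite {1}(divn_eq k (ordr a)) addnC iterD; congr iter.
elim: (k %/ ordr a) => //= m IH.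
by rewrite mulSn iterD IH iter_order //; exact: perm_inj.
Qed.

Lemma findex_shift r a c : so r a -> so r c ->
  fx a c = (fx r c + ordr r - fx r a) %% ordr r.
Proof.
move=> ra rc; set n := ordr r; set k := _ %% n.
have n_gt0 : 0 < n := fingraph.order_gt0 _ _.
have ra_lt : fx r a < n by rewrite findex_max.
have rc_lt : fx r c < n by rewrite findex_max.
suff -> : c = iter k sigma a by rewrite findex_iter // (order_same_origin ra) ltn_mod.
rewrite -[in RHS](iter_findex ra) -iterD iter_modn_order -/n modnDml subnK; last by lia.
by rewrite modnDr modn_small // iter_findex.
Qed.

Lemma findex_inj a b c : so a b -> so a c -> fx a b = fx a c -> b = c.
Proof. by move=> ab ac e; rewrite -(iter_findex ab) -(iter_findex ac) e. Qed.

Lemma interlace_sym a b c d : so a b -> so c d ->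
  a != b -> a != c -> a != d -> b != c -> b != d -> c != d ->
  interlace sigma (inr (a, b)) (inr (c, d)) = interlace sigma (inr (c, d)) (inr (a, b)).
Proof.
move=> ab cd nab nac nad nbc nbd ncd; rewrite /interlace /strictly_between.
case: (boolP (so a c)) => ac; last by rewrite same_origin_sym (negPf ac).
have ad : so a d := same_origin_trans ac cd.
rewrite same_origin_sym ac /= (eq_sym c) nac (eq_sym d) nad nbc /=.
rewrite (findex_shift ac (connect0 _ a)) (findex_shift ac ab) (findex_shift ac ad) findex0.
have pos z : so a z -> a != z -> 0 < fx a z < ordr a.
  by move=> az nz; rewrite findex_max // lt0n findex_eq0 nz.
have neq y z : so a y -> so a z -> y != z -> fx a y != fx a z.
  by move=> ay az; apply: contra => /eqP /(findex_inj ay az) ->.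
by apply: interlace_shift; auto.
Qed.

End CyclicOrder.

Section ShortMatchings.
Variables (E : finType) (sigma : {perm dart E}).
Local Notation so := (same_origin sigma).
Local Notation fx := (findex sigma).
Implicit Types (X : {set dart E}) (M : {set kedge E}).

Definition short_kedge (k : kedge E) : bool := if k is inr _ then true else false.

Definition kdeg (M : {set kedge E}) (d : dart E) : nat := #|[set k in M | d \in kends k]|.

Definition short_matching (X : {set dart E}) (M : {set kedge E}) : bool :=
  [forall k in M, short_kedge k && kedge_valid sigma k] &&
  [forall d, kdeg M d == (d \in X)].

Section OneMatching.
Variables (X : {set dart E}) (M : {set kedge E}).
Hypothesis hM : short_matching X M.

Lemma short_matching_kdeg d : kdeg M d = (d \in X).
Proof. by case/andP: hM => _ /forallP /(_ d) /eqP. Qed.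

Lemma short_matching_ends k d : k \in M -> d \in kends k -> d \in X.
Proof.
move=> kM dk; apply: contraT => dX; have /eqP := short_matching_kdeg d.
by rewrite (negPf dX) cards_eq0 => /eqP /setP /(_ k); rewrite !inE kM dk.
Qed.

Lemma short_matching_kedge k : k \in M ->
  exists a b, k = inr (a, b) /\
    [/\ so a b, a != b, enum_rank a < enum_rank b, a \in X & b \in X].
Proof.
move=> kM; case/andP: hM => /forall_inP /(_ k kM) + _.
case: k kM => // -[a b] kM /andP [_ /andP [oab rab]]; exists a, b; split=> //; split=> //.
- by apply: contraTneq rab => ->; rewrite ltnn.
- exact: short_matching_ends kM (set21 a b).
- exact: short_matching_ends kM (set22 a b).
Qed.

Lemma short_matching_uniq d k1 k2 : k1 \in M -> k2 \in M ->
  d \in kends k1 -> d \in kends k2 -> k1 = k2.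
Proof.
move=> k1M k2M dk1 dk2; have := short_matching_kdeg d.
rewrite (short_matching_ends k1M dk1) => /eqP /cards1P [k0 Md].
have : k1 \in [set k in M | d \in kends k] by rewrite inE k1M dk1.
have : k2 \in [set k in M | d \in kends k] by rewrite inE k2M dk2.
by rewrite Md !inE => /eqP -> /eqP ->.
Qed.

Lemma short_matching_cover d : d \in X -> exists2 k, k \in M & d \in kends k.
Proof.
move=> dX; have := short_matching_kdeg d; rewrite dX => /eqP /cards1P [k Md].
have : k \in [set k in M | d \in kends k] by rewrite Md set11.
by rewrite inE => /andP [kM dk]; exists k.
Qed.

Lemma big_short_matching (R : Type) (idx : R) (op : Monoid.com_law idx) (F : dart E -> R) :
  \big[op/idx]_(u in X) F u = \big[op/idx]_(k in M) \big[op/idx]_(u in kends k) F u.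
Proof.
pose kedge_at u := odflt (inr (u, u)) [pick k in M | u \in kends k].
have kedge_atP u : u \in X -> kedge_at u \in M /\ u \in kends (kedge_at u).
  move=> uX; rewrite /kedge_at; case: pickP => [k /andP [] //|none].
  by have [k kM uk] := short_matching_cover uX; have := none k; rewrite kM uk.
rewrite (partition_big kedge_at (mem M)); last by move=> u /kedge_atP [].
apply: eq_bigr => k kM; apply: eq_bigl => u; apply/andP/idP => [[uX /eqP <-]|uk].
  by case: (kedge_atP u uX).
have uX := short_matching_ends kM uk; split=> //.
by have [uM u_at] := kedge_atP u uX; rewrite (short_matching_uniq uM kM u_at uk).
Qed.

End OneMatching.

Lemma kdeg_setU1 M k0 d : k0 \notin M ->
  kdeg (k0 |: M) d = ((d \in kends k0) + kdeg M d)%N.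
Proof.
move=> k0M; rewrite /kdeg; case: (boolP (d \in kends k0)) => dk.
  rewrite (_ : [set k in k0 |: M | _] = k0 |: [set k in M | d \in kends k]).
    by rewrite cardsU1 inE (negPf k0M).
  by apply/setP => k; rewrite !inE; case: eqVneq => // ->.
rewrite add0n; apply: eq_card => k; rewrite !inE.
by case: eqVneq => // ->; rewrite (negPf dk) !andbF.
Qed.

Lemma short_matching_setU1 X M d0 c : d0 \in X -> c \in X -> d0 != c ->
  kedge_valid sigma (inr (d0, c)) -> inr (d0, c) \notin M ->
  short_matching X (inr (d0, c) |: M) = short_matching (X :\ d0 :\ c) M.
Proof.
move=> d0X cX d0c e0_valid e0M; congr (_ && _).
  apply/forall_inP/forall_inP => valid k kM; first by apply: valid; rewrite inE kM orbT.
  by move: kM; rewrite !inE => /orP [/eqP ->|]; [exact: e0_valid | exact: valid].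
apply: eq_forallb => d; rewrite kdeg_setU1 // !inE.
case: (eqVneq d d0) => [->|dd0]; first by rewrite d0X (negPf d0c); case: (kdeg M d0).
by case: (eqVneq d c) => [->|dc] /=; [rewrite cX; case: (kdeg M c) | rewrite add0n].
Qed.

Lemma short_matching_set0 M : short_matching set0 M = (M == set0).
Proof.
apply/idP/eqP => [hM|->].
  apply/setP => k; rewrite inE; apply/negP => kM.
  by have [a [b [_ [_ _ _ + _]]]] := short_matching_kedge hM kM; rewrite inE.
apply/andP; split; first by apply/forall_inP => k; rewrite inE.
by apply/forallP => d; rewrite inE /kdeg cards_eq0; apply/eqP/setP => k; rewrite !inE.
Qed.

Definition even_darts (X : {set dart E}) : bool :=
  [forall d, ~~ odd #|[set d' in X | so d d']|].

Lemma even_darts_set0 : even_darts set0.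
Proof.
by apply/forallP => d; rewrite (_ : [set d' in set0 | _] = set0) ?cards0 //; apply/setP => u; rewrite !inE.
Qed.

Lemma even_darts_setD2 X d0 c : d0 \in X -> c \in X -> d0 != c -> so d0 c ->
  even_darts (X :\ d0 :\ c) = even_darts X.
Proof.
move=> d0X cX d0c oc; apply: eq_forallb => d; congr (~~ _).
have -> : [set d' in X :\ d0 :\ c | so d d'] = [set d' in X | so d d'] :\ d0 :\ c.
  by apply/setP => u; rewrite !inE !andbA.
rewrite [in RHS](cardsD1 d0) [in RHS](cardsD1 c) !inE d0X cX eq_sym d0c /=.
have -> : so d c = so d d0.
  apply/idP/idP => h; last exact: same_origin_trans h oc.
  by apply: same_origin_trans h _; rewrite same_origin_sym.
by rewrite addnA addnn oddD odd_double.
Qed.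

Lemma tK_double_sum M : tK sigma M =
  \sum_(k1 in M) \sum_(k2 in M) ((enum_rank k1 < enum_rank k2) && interlace sigma k1 k2).
Proof.
rewrite /tK card_set_sum pair_big_dep [RHS]big_mkcond /=; apply: eq_bigr => p _.
by case: (p.1 \in M); case: (p.2 \in M).
Qed.

Lemma tK_setU1 M k0 : k0 \notin M ->
  {in M, forall k, interlace sigma k k0 = interlace sigma k0 k} ->
  tK sigma (k0 |: M) = (tK sigma M + \sum_(k in M) interlace sigma k0 k)%N.
Proof.
move=> k0M sym; rewrite !tK_double_sum big_setU1 //= big_setU1 //= ltnn add0n.
under [X in _ + X = _]eq_bigr => k _ do rewrite big_setU1 //=.
rewrite big_split /= addnCA addnA -big_split /= addnC; congr (_ + _)%N.
apply: eq_bigr => k kM; rewrite sym //.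
have : enum_rank k0 != enum_rank k by apply: contraNneq k0M => /enum_rank_inj ->.
by rewrite -val_eqE /=; case: ltngtP; rewrite ?andbF ?addn0.
Qed.

Lemma short_matching_interlace_sym X M d0 c k : short_matching X M ->
    d0 \notin X -> c \notin X -> so d0 c -> d0 != c -> k \in M ->
  interlace sigma k (inr (d0, c)) = interlace sigma (inr (d0, c)) k.
Proof.
move=> hM d0X cX oc d0c kM.
have [a [b [-> [oab ab _ aX bX]]]] := short_matching_kedge hM kM.
have ad0 : a != d0 by apply: contraNneq d0X => <-.
have bd0 : b != d0 by apply: contraNneq d0X => <-.
have ac : a != c by apply: contraNneq cX => <-.
have bc : b != c by apply: contraNneq cX => <-.
exact: interlace_sym.
Qed.

(* An edge at the vertex of [d0] crosses [(d0, c)] iff exactly one of its ends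
   lies strictly between [d0] and [c]. *)
Lemma sign_crossings (R : pzRingType) X M d0 c : short_matching X M -> d0 \notin X ->
  ((-1) ^+ (\sum_(k in M) interlace sigma (inr (d0, c)) k) =
   (-1) ^+ #|[set u in X | so d0 u & (fx d0 u < fx d0 c)%N]| :> R)%R.
Proof.
move=> hM d0X.
have -> : #|[set u in X | so d0 u & (fx d0 u < fx d0 c)%N]| =
    \sum_(u in X) (so d0 u && (fx d0 u < fx d0 c)).
  by rewrite card_set_sum [RHS]big_mkcond; apply: eq_bigr => u _; case: (u \in X).
rewrite (big_short_matching hM) /=.
rewrite !(big_morph _ (@exprD R _) (expr0 _)); apply: eq_bigr => k kM.
have [a [b [-> [oab ab _ aX bX]]]] := short_matching_kedge hM kM.
have ad0 : a != d0 by apply: contraNneq d0X => <-.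
have bd0 : b != d0 by apply: contraNneq d0X => <-.
rewrite big_setU1 ?inE // big_set1.
rewrite /interlace /strictly_between ad0 bd0 /=.
case: (boolP (so d0 a)) => oa; last first.
  rewrite (_ : so d0 b = false) //; apply: contraNF oa => /same_origin_trans.
  by apply; rewrite same_origin_sym.
rewrite (same_origin_trans oa oab) /= -[LHS]signr_odd -[RHS]signr_odd.
by case: (fx d0 a < fx d0 c); case: (fx d0 b < fx d0 c).
Qed.

Definition vertex_mates X d0 : {set dart E} := [set c in X :\ d0 | so d0 c].

(* Short edges list their endpoint of smaller rank first, so the edge covering
   a dart of least rank is of the form [inr (d0, c)]. *)
Lemma short_matching_mate X M d0 : short_matching X M -> d0 \in X ->
    {in X, forall d, enum_rank d0 <= enum_rank d} ->
  exists c, forall c', (c' \in vertex_mates X d0) && (inr (d0, c') \in M) = (c' == c).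
Proof.
move=> hM d0X d0_min; have [k kM d0k] := short_matching_cover hM d0X.
have [a [b [ek [oab ab rab aX bX]]]] := short_matching_kedge hM kM; subst k.
have ad0 : a = d0.
  move: d0k; rewrite !inE => /orP [/eqP -> //|/eqP bd0].
  by move: rab (d0_min a aX); rewrite -bd0; case: ltngtP.
subst a; exists b => c'; apply/andP/eqP => [[_ c'M]|->].
  by case: (short_matching_uniq hM c'M kM (set21 d0 c') (set21 d0 b)).
by rewrite !inE eq_sym ab bX oab kM.
Qed.

Lemma sum_short_matchings_by_mate (V : nmodType) X d0 (F : {set kedge E} -> V) :
    d0 \in X -> {in X, forall d, enum_rank d0 <= enum_rank d} ->
  (\sum_(M | short_matching X M) F M =
   \sum_(c in vertex_mates X d0) \sum_(M | short_matching X M && (inr (d0, c) \in M)) F M)%R.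
Proof.
move=> d0X d0_min; rewrite (exchange_big_dep (short_matching X)) /=; last by move=> M c _ /andP [].
apply: eq_bigr => M hM; have [c mate_c] := short_matching_mate hM d0X d0_min.
by rewrite (big_pred1 c) // => c' /=; rewrite hM mate_c.
Qed.

Definition signed_short_matchings (R : pzRingType) X : R :=
  (\sum_(M | short_matching X M) (-1) ^+ tK sigma M)%R.

Lemma sum_short_matchings_through (R : pzRingType) X d0 c :
    d0 \in X -> {in X, forall d, enum_rank d0 <= enum_rank d} -> c \in vertex_mates X d0 ->
  (\sum_(M | short_matching X M && (inr (d0, c) \in M)) (-1) ^+ tK sigma M =
   signed_short_matchings R (X :\ d0 :\ c)
     * (-1) ^+ #|[set u in vertex_mates X d0 | (fx d0 u < fx d0 c)%N]|)%R.
Proof.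
move=> d0X d0_min; rewrite inE => /andP [/setD1P [cd0 cX] oc].
set e0 : kedge E := inr (d0, c); set X' := X :\ d0 :\ c.
have d0c : d0 != c by rewrite eq_sym.
have e0_valid : kedge_valid sigma e0.
  rewrite /= oc ltn_neqAle d0_min // andbT /=.
  by apply: contra d0c => /eqP /val_inj /enum_rank_inj ->.
have d0X' : d0 \notin X' by rewrite !inE eqxx andbF.
have cX' : c \notin X' by rewrite !inE eqxx.
have e0M' M' : short_matching X' M' -> e0 \notin M'.
  by move=> hM'; apply: contra d0X' => e0M; apply: (short_matching_ends hM' e0M); rewrite /= set21.
rewrite (reindex_onto (fun M' => e0 |: M') (fun M => M :\ e0)) /=; last first.
  by move=> M /andP [_ e0M]; rewrite setD1K.
rewrite (eq_bigl (short_matching X')); last first.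
  move=> M'; case: (boolP (e0 \in M')) => e0M.
    case: eqP => [eM|_]; last by rewrite andbF; apply/esym/negbTE; exact: contraL (e0M' M') e0M.
    by move: e0M; rewrite -eM setD11.
  by rewrite setU1K // eqxx setU11 !andbT short_matching_setU1.
rewrite /signed_short_matchings mulr_suml.
apply: eq_bigr => M' hM'.
rewrite tK_setU1 ?e0M' //; last first.
  by move=> k; apply: short_matching_interlace_sym hM' d0X' cX' oc d0c.
rewrite exprD (sign_crossings _ _ hM' d0X'); congr (_ * (-1) ^+ _)%R.
apply: eq_card => u; rewrite !inE.
by case: (eqVneq u c) => [->|_]; rewrite ?ltnn ?andbF //= -!andbA.
Qed.

Lemma vertex_mates_odd X d0 : d0 \in X ->
  odd #|vertex_mates X d0| = ~~ odd #|[set d in X | so d0 d]|.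
Proof.
move=> d0X; rewrite (cardsD1 d0 [set d in X | so d0 d]) !inE d0X /same_origin connect0.
by rewrite add1n oddS negbK; congr odd; apply: eq_card => u; rewrite !inE andbA.
Qed.

Theorem signed_short_matchingsE (R : pzRingType) X :
  (signed_short_matchings R X = (even_darts X)%:R)%R.
Proof.
move: {2}#|X|.+1 (ltnSn #|X|) => n; elim: n X => // n IH X cardX.
have [->|[d1 d1X]] := set_0Vmem X.
  rewrite /signed_short_matchings (eq_bigl (pred1 set0)); last exact: short_matching_set0.
  by rewrite big_pred1_eq tK_double_sum big_set0 even_darts_set0.
have [d0 d0X d0_min] := arg_minnP (fun d => enum_rank d) d1X.
have {}d0X : d0 \in X := d0X.
rewrite /signed_short_matchings (sum_short_matchings_by_mate _ d0X d0_min).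
set A := vertex_mates X d0.
rewrite (eq_bigr (fun c => (even_darts X)%:R * (-1) ^+ #|[set u in A | (fx d0 u < fx d0 c)%N]|))%R; last first.
  move=> c cA; have := cA; rewrite inE => /andP [/setD1P [cd0 cX] oc].
  rewrite sum_short_matchings_through // IH ?even_darts_setD2 // 1?eq_sym //.
  by move: cardX; rewrite (cardsD1 d0 X) d0X (cardsD1 c) !inE cX cd0 /= !add1n ltnS => /ltnW.
rewrite -mulr_sumr sum_sign_rank; last first.
  by move=> u v; rewrite !inE => /andP [_ ou] /andP [_ ov]; apply: findex_inj.
case: (boolP (even_darts X)) => [/forallP /(_ d0) even_d0 | _]; last by rewrite mul0r.
by rewrite vertex_mates_odd // even_d0 mulr1.
Qed.

End ShortMatchings.

Section Decomposition.
Variables (E : finType) (sigma : {perm dart E}).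
Implicit Types (P : {set E}) (S M : {set kedge E}).

Definition darts_of P : {set dart E} := [set d | d.1 \in P].

Definition short_kedges : {set kedge E} := [set k | short_kedge k].

Definition long_kedges (A : {set E}) : {set kedge E} :=
  [set k | if k is inl e then e \in A else false].

Definition short_support M : {set E} := [set e | inl e \notin M].

Lemma short_matching_sub X S : short_matching sigma X S -> S \subset short_kedges.
Proof.
by move=> hS; apply/subsetP => k kS; have [a [b [-> _]]] := short_matching_kedge hS kS; rewrite inE.
Qed.

Lemma kends_inl (e : E) (d : dart E) : (d \in kends (inl e)) = (d.1 == e).
Proof. by case: d => d1 []; rewrite /= !inE !xpair_eqE /= ?andbT ?andbF ?orbF. Qed.

Lemma kdeg_setU S M d : [disjoint S & M] -> kdeg (S :|: M) d = (kdeg S d + kdeg M d)%N.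
Proof.
move=> dSM; rewrite /kdeg -cardsUI (_ : _ :&: _ = set0) ?cards0 ?addn0; last first.
  apply/setP => k; rewrite !inE; case: (boolP (k \in S)) => // kS.
  by rewrite (disjointFr dSM kS) /= andbF.
by apply: eq_card => k; rewrite !inE andb_orl.
Qed.

Lemma kdeg_long A d : kdeg (long_kedges A) d = (d.1 \in A).
Proof.
rewrite /kdeg (_ : [set k in _ | _] = if d.1 \in A then [set inl d.1] else set0).
  by case: ifP; rewrite ?cards1 ?cards0.
apply/setP => -[e|k]; rewrite inE ?kends_inl; last by case: ifP; rewrite ?inE.
case: ifP => dA; rewrite !inE.
  by rewrite (inj_eq inl_inj) eq_sym; case: eqVneq => [->|]; rewrite ?dA ?andbF.
by case: eqVneq => [<-|]; rewrite ?dA ?andbF.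
Qed.

Lemma setI_short_setU_long S A :
  (S :|: long_kedges A) :&: short_kedges = S :&: short_kedges.
Proof. by apply/setP => -[e|k]; rewrite !inE ?andbF ?orbF. Qed.

Lemma inl_notin_short S e : S \subset short_kedges -> inl e \notin S.
Proof. by move=> sS; apply/negP => /(subsetP sS); rewrite inE. Qed.

Lemma short_disjoint_long S A : S \subset short_kedges -> [disjoint S & long_kedges A].
Proof.
move=> sS; rewrite -setI_eq0; apply/eqP/setP => -[e|k]; rewrite !inE ?andbF //.
by rewrite (negPf (inl_notin_short e sS)).
Qed.

Lemma short_support_setU_long S P : S \subset short_kedges ->
  short_support (S :|: long_kedges (~: P)) = P.
Proof.
move=> sS; apply/setP => e; rewrite !inE negb_or negbK.
by rewrite (negPf (inl_notin_short e sS)).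
Qed.

Lemma perfect_matching_setU_long S P : S \subset short_kedges ->
  perfect_matching sigma (S :|: long_kedges (~: P)) = short_matching sigma (darts_of P) S.
Proof.
move=> sS; congr (_ && _).
  apply/forall_inP/forall_inP => valid k kS.
    by rewrite valid ?inE ?kS // andbT; have := subsetP sS k kS; rewrite inE.
  by case/setUP: kS => [/valid /andP [] //|]; case: k => // k; rewrite inE.
apply: eq_forallb => d; rewrite -/(kdeg _ d) kdeg_setU ?short_disjoint_long // kdeg_long !inE.
by case: (d.1 \in P) => /=; rewrite ?addn0 ?addn1.
Qed.

Lemma perfect_matching_decomp S P :
  [&& perfect_matching sigma (S :|: long_kedges (~: P)),
      short_support (S :|: long_kedges (~: P)) == P &
      (S :|: long_kedges (~: P)) :&: short_kedges == S] = short_matching sigma (darts_of P) S.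
Proof.
rewrite setI_short_setU_long; apply/and3P/idP => [[pm _ /eqP sS]|hS].
  by rewrite -perfect_matching_setU_long // -sS subsetIr.
have sS := short_matching_sub hS; split.
- by rewrite perfect_matching_setU_long.
- by rewrite short_support_setU_long.
- by apply/eqP/setIidPl.
Qed.

Lemma short_support_recompose M :
  (M :&: short_kedges) :|: long_kedges (~: short_support M) = M.
Proof. by apply/setP => -[e|k]; rewrite !inE ?negbK ?andbF ?andbT ?orbF. Qed.

Lemma tK_setU_long S A : tK sigma (S :|: long_kedges A) = tK sigma S.
Proof.
by apply: eq_card => -[[e1|[a b]] [e2|[c d]]]; rewrite !inE /interlace ?andbF ?orbF.
Qed.

Lemma kappa_dot_D_setU_long kappa S P : S \subset short_kedges ->
  kappa_dot_D kappa (S :|: long_kedges (~: P)) = #|kappa :\: P|.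
Proof.
by move=> sS; apply: eq_card => e; rewrite !inE (negPf (inl_notin_short e sS)) andbC.
Qed.

Lemma weight_D_setU_long (R : rcfType) (x : E -> R) P S : (forall e, (0 <= x e)%R) ->
  short_matching sigma (darts_of P) S -> weight_D x (S :|: long_kedges (~: P)) = weight_P x P.
Proof.
move=> x_ge0 hS; have sS := short_matching_sub hS.
rewrite /weight_D (big_setID short_kedges) /= setI_short_setU_long (setIidPl sS).
rewrite [X in (_ * X)%R]big1 ?mulr1; last by move=> -[e|k]; rewrite !inE.
rewrite (eq_bigr (fun k => \prod_(u in kends k) Num.sqrt (x u.1))%R); last first.
  move=> k kS; have [a [b [-> [_ ab _ _ _]]]] := short_matching_kedge hS kS.
  by rewrite /= big_setU1 ?inE // big_set1 sqrtrM.
rewrite -(big_short_matching hS) /weight_P.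
rewrite (eq_bigr (fun e => \prod_(b : bool) Num.sqrt (x e))%R); last first.
  by move=> e _; rewrite big_bool /= -expr2 sqr_sqrtr.
by rewrite pair_big_dep /=; apply: eq_bigl => u; rewrite inE andbT.
Qed.

Lemma even_subgraph_darts P : even_subgraph sigma P = even_darts sigma (darts_of P).
Proof. by apply: eq_forallb => d; congr (~~ odd _); apply: eq_card => u; rewrite !inE andbC. Qed.

End Decomposition.

Local Open Scope ring_scope.

Theorem lemma2p3 (E : finType) (sigma : {perm dart E})
  (Hconn : map_connected sigma) (Hplanar : map_planar sigma)
  (R : rcfType) (x : E -> R) (hx : forall e, 0 <= x e)
  (kappa : {set E}) :
  \sum_(P : {set E} | even_subgraph sigma P)
      (-1) ^+ kappa_dot_P kappa P * weight_P x P
  = (-1) ^+ #|kappa| *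
    \sum_(M : {set kedge E} | perfect_matching sigma M)
      (-1) ^+ tK sigma M * (-1) ^+ kappa_dot_D kappa M * weight_D x M.
Proof.
rewrite mulr_sumr (partition_big (@short_support E) predT) //= [LHS]big_mkcond.
apply: eq_bigr => P _.
rewrite (reindex_onto (fun S => S :|: long_kedges (~: P)) (fun M => M :&: short_kedges E)) /=;
  last by move=> M /andP [_ /eqP <-]; apply: short_support_recompose.
rewrite (eq_bigl (short_matching sigma (darts_of P))); last first.
  by move=> S; rewrite -andbA perfect_matching_decomp.
rewrite (eq_bigr (fun S => (-1) ^+ tK sigma S * ((-1) ^+ kappa_dot_P kappa P * weight_P x P)));
  last first.
  move=> S hS; rewrite tK_setU_long kappa_dot_D_setU_long ?(short_matching_sub hS) //.
  rewrite (weight_D_setU_long hx hS) /kappa_dot_P -(cardsID P kappa) exprD -!mulrA.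
  by rewrite (mulrCA ((-1) ^+ #|kappa :\: P|)) signrMK mulrCA.
rewrite -mulr_suml -/(signed_short_matchings sigma R (darts_of P)) signed_short_matchingsE.
rewrite -even_subgraph_darts.
by case: even_subgraph; rewrite ?mul1r ?mul0r.
Qed.
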